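(* For every $n\ge 3$, the cycle $C_n$ on $n$ vertices satisfies $\phi(C_n)\le 6^{n/4}$, with equality if and only if $n=4$.
   Context: A subset $F$ of vertices of a graph $G$ is a dissociation set if $G[F]$ has maximum degree at most $1$; a maximal dissociation set is one not properly contained in another dissociation set; $\phi(G)$ is the number of maximal dissociation sets of $G$. *)

From mathcomp Require Import all_boot.
Set Implicit Arguments. Unset Strict Implicit. Unset Printing Implicit Defensive.

(* A simple graph is given by a symmetric irreflexive adjacency relation [e]
   on a finite vertex type [T]. *)

Definition dissociation_set (T : finType) (e : rel T) (F : {set T}) : bool :=
  [forall x in F, #|[set y in F | e x y]| <= 1].

Definition maximal_dissociation_set (T : finType) (e : rel T) (F : {set T}) : bool :=
  maxset (dissociation_set e) F.

Definition phi (T : finType) (e : rel T) : nat :=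
  #|[set F : {set T} | maximal_dissociation_set e F]|.

(* The cycle C_n on vertex set 'I_n = {0,...,n-1}: i ~ j iff j = i+1 mod n
   or i = j+1 mod n (a simple cycle for n >= 3). *)
Definition cycle_adj (n : nat) : rel 'I_n :=
  fun i j => (val j == (val i).+1 %% n) || (val i == (val j).+1 %% n).
Arguments cycle_adj : clear implicits.

From mathcomp Require Import all_boot.
From mathcomp Require Import zify.
Set Implicit Arguments. Unset Strict Implicit. Unset Printing Implicit Defensive.

(* Read a vertex set F of C_n as the binary word w_F whose i-th letter says
   whether vertex i lies in F.  If F is a maximal dissociation set, then no
   window of the cyclic word w_F contains one of the factors 111 (a vertex of
   degree 2 in G[F]), 000, 0100 or 0010 (in each of the last three cases a
   missing vertex could be added).  Hence phi(C_n) is at most the number of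
   words of length n that are "admissible" cyclically, which in turn is at most
   the number L(n) of admissible linear words.  Admissibility is inherited by
   factors, so L is submultiplicative, L(a + b) <= L(a) L(b); together with
   the computed values L(7), ..., L(13) this gives L(n)^4 < 6^n for n >= 7.
   The cases n = 3, 5, 6 follow from the computed number of cyclically
   admissible words, and for n = 4 the six cyclically admissible words are
   checked, by a decision procedure for maximality, to be maximal dissociation
   sets, so phi(C_4) = 6. *)

Section Dissociation.
Variables (T : finType) (e : rel T).

Definition nbhd (F : {set T}) (x : T) : {set T} := [set y in F | e x y].

Lemma dissociation_subset (A B : {set T}) :
  A \subset B -> dissociation_set e B -> dissociation_set e A.
Proof.
move=> sAB /forall_inP disB; apply/forall_inP => x xA.
apply: leq_trans (disB x (subsetP sAB x xA)); apply: subset_leq_card.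
by apply/subsetP => y; rewrite !inE => /andP[/(subsetP sAB) -> ->].
Qed.

Lemma maximal_dissociationP (F : {set T}) :
  reflect (dissociation_set e F /\
           forall v, v \notin F -> ~~ dissociation_set e (v |: F))
          (maximal_dissociation_set e F).
Proof.
apply: (iffP maxsetP) => -[disF maxF].
  split=> // v vF; apply/negP => /maxF /(_ (subsetUr _ _)) /setP /(_ v).
  by rewrite !inE eqxx (negPf vF).
split=> // B disB sFB; apply/eqP.
rewrite eqEsubset sFB andbT; apply/subsetP => v vB.
apply: (contraTT (maxF v)); apply: dissociation_subset disB.
by rewrite subUset sub1set vB.
Qed.

Lemma dissociation_setU1 (F : {set T}) v :
  dissociation_set e F -> ~~ e v v -> #|nbhd F v| <= 1 ->
  (forall u, u \in F -> e u v -> #|nbhd F u| = 0) ->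
  dissociation_set e (v |: F).
Proof.
move=> /forall_inP disF evv deg_v deg_u; apply/forall_inP => x.
case/setU1P => [->|xF].
  apply: leq_trans deg_v; apply: subset_leq_card; apply/subsetP => y.
  by rewrite !inE => /andP[/predU1P[-> evv'|-> ->]] //; rewrite evv' in evv.
have [exv|exv] := boolP (e x v).
  apply: (@leq_trans #|v |: nbhd F x|); last by rewrite cardsU1 deg_u ?addn0 ?leq_b1.
  apply: subset_leq_card; apply/subsetP => y.
  by rewrite !inE => /andP[/predU1P[->|->] ->]; rewrite ?eqxx ?orbT.
apply: leq_trans (disF x xF); apply: subset_leq_card; apply/subsetP => y.
rewrite !inE => /andP[/predU1P[->|->] // exy]; by rewrite exy in exv.
Qed.

End Dissociation.

(* Maximality made decidable by computation: given an explicit duplicate-free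
   list s of all vertices, replace cardinalities by counts along s. *)
Section DecideMaximality.
Variables (T : finType) (e : rel T) (s : seq T).
Hypotheses (s_uniq : uniq s) (s_full : forall x, x \in s).

Definition dissociationb (m : pred T) : bool :=
  all (fun x => ~~ m x || (count (fun y => m y && e x y) s <= 1)) s.

Definition maximalb (m : pred T) : bool :=
  dissociationb m && all (fun v => m v || ~~ dissociationb (predU1 v m)) s.

Lemma count_full (P : pred T) : count P s = #|P|.
Proof.
rewrite cardE size_filter -enumT; apply/permP/uniq_perm => // [|x].
  exact: enum_uniq.
by rewrite mem_enum s_full.
Qed.

Lemma dissociationbE (F : {set T}) (m : pred T) : (forall x, (x \in F) = m x) ->
  dissociation_set e F = dissociationb m.
Proof.
move=> Fm; have deg x : #|nbhd e F x| = count (fun y => m y && e x y) s.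
  by rewrite count_full; apply: eq_card => y; rewrite !inE Fm.
apply/forall_inP/allP => [disF x _ | disF x xF].
  by rewrite -Fm -deg; case xF: (x \in F) => //=; apply: disF.
by have := disF x (s_full x); rewrite -Fm xF deg.
Qed.

Lemma maximalbP (m : pred T) :
  maximalb m -> maximal_dissociation_set e [set x | m x].
Proof.
case/andP=> dis /allP maxm; apply/maximal_dissociationP; split.
  by rewrite (dissociationbE (m := m)) // => x; rewrite inE.
move=> v; rewrite inE => mv; have := maxm v (s_full v); rewrite (negPf mv).
by rewrite (dissociationbE (m := predU1 v m)) // => x; rewrite !inE.
Qed.
End DecideMaximality.

(* The factors excluded from the word of a maximal dissociation set of a cycle:
   three consecutive members, three consecutive non-members, and the patterns
   0100 and 0010, each of which leaves a vertex that could be added. *)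
Definition forbidden : seq (seq bool) :=
  [:: [:: true; true; true]; [:: false; false; false];
      [:: false; true; false; false]; [:: false; false; true; false]].

Definition admissible (w : seq bool) : bool := ~~ has (fun p => infix p w) forbidden.

Lemma admissible_infix u w : infix u w -> admissible w -> admissible u.
Proof.
move=> uw /hasPn adm; apply/hasPn => p /adm; apply: contra => pu.
exact: infix_trans pu uw.
Qed.

(* Appending the first three letters exposes every window of length <= 4 of w
   read cyclically (for size w >= 3). *)
Definition cyclic_ext (w : seq bool) : seq bool := w ++ take 3 w.

Fixpoint words (n : nat) : seq (seq bool) :=
  if n is k.+1 then map (cons true) (words k) ++ map (cons false) (words k)
  else [:: [::]].

Lemma mem_words n w : (w \in words n) = (size w == n).
Proof.
elim: n w => [|n IH] [|b w] //=; rewrite mem_cat.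
- by apply/orP => -[] /mapP[].
- have mem_cons c s : (b :: w \in map (cons c) s) = (b == c) && (w \in s).
    by apply/mapP/andP => [[v vs [-> ->]]|[/eqP-> ws]]; last exists w.
  by rewrite !mem_cons eqSS -IH; case: b {mem_cons}; rewrite ?orbF.
Qed.

Lemma uniq_words n : uniq (words n).
Proof.
elim: n => [|n IH] //=; rewrite cat_uniq !map_inj_uniq ?IH //=; try by move=> x y [].
rewrite andbT; apply/hasPn => _ /mapP[w _ ->]; by apply/mapP => -[? _ []].
Qed.

Definition linear_count (n : nat) : nat := count admissible (words n).
Definition cyclic_count (n : nat) : nat :=
  count (fun w => admissible (cyclic_ext w)) (words n).

Lemma cyclic_count_le n : cyclic_count n <= linear_count n.
Proof. by apply: sub_count => w; apply: admissible_infix; apply: prefix_infix. Qed.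

Lemma linear_count_submul a b :
  linear_count (a + b) <= linear_count a * linear_count b.
Proof.
rewrite /linear_count -!size_filter -(size_allpairs cat).
apply: uniq_leq_size => [|w]; first exact/filter_uniq/uniq_words.
rewrite mem_filter mem_words => /andP[adm /eqP sw].
rewrite -(cat_take_drop a w); apply: allpairs_f; rewrite mem_filter mem_words.
- rewrite size_takel ?sw ?leq_addr // eqxx andbT.
  exact: admissible_infix (infix_take w a) adm.
- rewrite size_drop sw addKn eqxx andbT.
  exact: admissible_infix (infix_drop w a) adm.
Qed.

(* A submultiplicative f satisfying f(m)^p < c^m on a window [k, 2k) satisfies
   it for all m >= k, by peeling off blocks of length k. *)
Lemma submul_pow_bound (f : nat -> nat) (p c k : nat) : 0 < k ->
  (forall a b, f (a + b) <= f a * f b) ->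
  (forall m, k <= m < k.*2 -> f m ^ p < c ^ m) ->
  forall m, k <= m -> f m ^ p < c ^ m.
Proof.
move=> k_gt0 submul window; elim/ltn_ind => m IH km.
have [small|large] := ltnP m k.*2; first by apply: window; rewrite km.
have -> : m = (m - k) + k by lia.
apply: (@leq_ltn_trans ((f (m - k) * f k) ^ p)).
  by case: p {window IH} => [//|p]; rewrite leq_exp2r ?submul.
by rewrite expnMn expnD ltn_mul // ?IH ?window; lia.
Qed.

Lemma linear_count_window m : 7 <= m < 14 -> linear_count m ^ 4 < 6 ^ m.
Proof.
have [L7 L8 L9 [L10 L11 L12 L13]] :
    [/\ linear_count 7 = 22, linear_count 8 = 30, linear_count 9 = 42
       & [/\ linear_count 10 = 59, linear_count 11 = 83, linear_count 12 = 116
            & linear_count 13 = 162]].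
  by vm_compute.
move=> /andP[lo hi].
have : m \in iota 7 7 by rewrite mem_iota; lia.
by rewrite !inE => /or4P[|||/or4P[|||//]] /eqP->;
  rewrite ?L7 ?L8 ?L9 ?L10 ?L11 ?L12 ?L13; lia.
Qed.

Lemma linear_count_bound m : 7 <= m -> linear_count m ^ 4 < 6 ^ m.
Proof.
exact: (@submul_pow_bound _ _ _ 7 isT linear_count_submul linear_count_window).
Qed.

Section Cycle.
Variables (n : nat) (n_ge3 : 3 <= n).
Local Notation e := (cycle_adj n).

Definition vtx (k : nat) : 'I_n := Ordinal (ltn_pmod k (ltnW (ltnW n_ge3))).

Lemma val_vtx k : val (vtx k) = k %% n.
Proof. by []. Qed.

Lemma vtx_ord (x : 'I_n) : vtx x = x.
Proof. by apply: val_inj; rewrite val_vtx modn_small. Qed.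

Lemma vtx_addn k : vtx (n + k) = vtx k.
Proof. by apply: val_inj; rewrite !val_vtx modnDl. Qed.

(* The two neighbours of a vertex are distinct since n >= 3. *)
Lemma vtx_neq2 k : vtx k != vtx k.+2.
Proof.
by rewrite -val_eqE !val_vtx -addn2 -{1}[k]addn0 eqn_modDl mod0n modn_small.
Qed.

Lemma adj_vtx k (y : 'I_n) : e (vtx k.+1) y = (y == vtx k) || (y == vtx k.+2).
Proof.
rewrite /cycle_adj orbC -!val_eqE !val_vtx; congr orb.
  by rewrite -[k.+1]addn1 -[(val y).+1]addn1 eqn_modDr (modn_small (ltn_ord y)) eq_sym.
by rewrite -addn1 modnDml addn1.
Qed.

Lemma adj_sym x y : e x y = e y x.
Proof. exact: orbC. Qed.

Lemma adj_irr x : ~~ e x x.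
Proof.
rewrite /cycle_adj orbb; case: x => r r_lt /=.
rewrite -{1}(modn_small r_lt) -[r.+1]addn1 -{1}[r]addn0 eqn_modDl mod0n.
by rewrite modn_small // ltnW.
Qed.

Lemma card_nbhd_vtx (F : {set 'I_n}) k :
  #|nbhd e F (vtx k.+1)| = (vtx k \in F) + (vtx k.+2 \in F).
Proof.
have uniq_nb : uniq (filter (mem F) [:: vtx k; vtx k.+2]).
  by rewrite filter_uniq //= inE vtx_neq2.
rewrite -[RHS]addn0 -addnA -[RHS]/(count (mem F) [:: vtx k; vtx k.+2]) -size_filter.
rewrite -(card_uniqP uniq_nb); apply: eq_card => y.
by rewrite mem_filter !inE adj_vtx andbC.
Qed.

Lemma dissociation_add_vtx (F : {set 'I_n}) k :
  dissociation_set e F -> (vtx k \in F) + (vtx k.+2 \in F) <= 1 ->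
  (vtx k \in F -> #|nbhd e F (vtx k)| = 0) ->
  (vtx k.+2 \in F -> #|nbhd e F (vtx k.+2)| = 0) ->
  dissociation_set e (vtx k.+1 |: F).
Proof.
move=> disF deg deg_l deg_r; apply: dissociation_setU1 => //.
- exact: adj_irr.
- by rewrite card_nbhd_vtx.
- by move=> u uF; rewrite adj_sym adj_vtx => /orP[] /eqP Eu; rewrite Eu in uF *;
    [exact: deg_l | exact: deg_r].
Qed.

Section MaximalPatterns.
Variable F : {set 'I_n}.
Hypothesis F_max : maximal_dissociation_set e F.

(* Vertex k + 1 would have degree 2 in G[F]. *)
Lemma no_111 k : ~~ [&& vtx k \in F, vtx k.+1 \in F & vtx k.+2 \in F].
Proof.
case/maximal_dissociationP: F_max => /forall_inP disF _.
by apply/and3P => -[a b c]; have := disF _ b; rewrite card_nbhd_vtx a c.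
Qed.

(* Vertex k + 1 could be added. *)
Lemma no_000 k : ~~ [&& vtx k \notin F, vtx k.+1 \notin F & vtx k.+2 \notin F].
Proof.
case/maximal_dissociationP: F_max => disF maxF; apply/and3P => -[a b c].
case/negP: (maxF _ b); apply: dissociation_add_vtx => //;
  by rewrite ?(negPf a) ?(negPf c).
Qed.

(* Vertex k + 2 could be added: its neighbour k + 1 is isolated in G[F]. *)
Lemma no_0100 k :
  ~~ [&& vtx k \notin F, vtx k.+1 \in F, vtx k.+2 \notin F & vtx k.+3 \notin F].
Proof.
case/maximal_dissociationP: F_max => disF maxF; apply/and4P => -[a b c d].
case/negP: (maxF _ c); apply: (@dissociation_add_vtx _ k.+1) => //.
- by rewrite b (negPf d).
- by rewrite card_nbhd_vtx (negPf a) (negPf c).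
- by rewrite (negPf d).
Qed.

(* Vertex k + 1 could be added: its neighbour k + 2 is isolated in G[F]. *)
Lemma no_0010 k :
  ~~ [&& vtx k \notin F, vtx k.+1 \notin F, vtx k.+2 \in F & vtx k.+3 \notin F].
Proof.
case/maximal_dissociationP: F_max => disF maxF; apply/and4P => -[a b c d].
case/negP: (maxF _ b); apply: dissociation_add_vtx => //.
- by rewrite c (negPf a).
- by rewrite (negPf a).
- by rewrite card_nbhd_vtx (negPf b) (negPf d).
Qed.
End MaximalPatterns.

Definition reading (F : {set 'I_n}) (k m : nat) : seq bool :=
  [seq vtx i \in F | i <- iota k m].

Lemma reading_forbidden F k p : maximal_dissociation_set e F ->
  p \in forbidden -> reading F k (size p) != p.
Proof.
move=> Fmax; rewrite !inE => /or4P[] /eqP-> /=;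
  rewrite !eqseq_cons ?andbT ?eqb_id ?eqbF_neg.
- exact: no_111.
- exact: no_000.
- exact: no_0100.
- exact: no_0010.
Qed.

Lemma infix_reading F m p :
  infix p (reading F 0 m) -> exists k, p = reading F k (size p).
Proof.
case/infixP=> s [s' E]; exists (size s).
have /eqP : size (reading F 0 m) == size s + size p + size s'.
  by rewrite E !size_cat addnA.
rewrite size_map size_iota => Em.
have : take (size p) (drop (size s) (reading F 0 m)) = p.
  by rewrite E drop_size_cat // take_size_cat.
rewrite -map_drop -map_take drop_iota take_iota add0n.
have -> : minn (size p) (m - size s) = size p by lia.
by move=> Ep; rewrite -[in LHS]Ep.
Qed.

Lemma reading_wrap F : reading F 0 (n + 3) = cyclic_ext (reading F 0 n).
Proof.
rewrite /reading /cyclic_ext iotaD map_cat -map_take take_iota (minn_idPl n_ge3).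
have -> : iota (0 + n) 3 = map (addn n) (iota 0 3) by rewrite add0n -iotaDl addn0.
by rewrite -map_comp; congr (_ ++ _); apply: eq_map => i /=; rewrite vtx_addn.
Qed.

Lemma reading_inj : injective (fun F : {set 'I_n} => reading F 0 n).
Proof.
move=> F1 F2 E; apply/setP => x; have := congr1 (nth false ^~ x) E.
by rewrite /= !(nth_map 0) ?size_iota // nth_iota // add0n vtx_ord.
Qed.

Lemma admissible_reading F : maximal_dissociation_set e F ->
  admissible (cyclic_ext (reading F 0 n)).
Proof.
move=> Fmax; rewrite -reading_wrap; apply/hasPn => p forb_p.
apply/negP => /infix_reading[k Ep].
by move: (reading_forbidden k Fmax forb_p); rewrite -Ep eqxx.
Qed.

Lemma phi_le_cyclic_count : phi e <= cyclic_count n.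
Proof.
rewrite /phi /cyclic_count -size_filter cardE -(size_map (fun F => reading F 0 n)).
apply: uniq_leq_size => [|w /mapP[F]].
  by rewrite map_inj_uniq ?enum_uniq //; exact: reading_inj.
rewrite mem_enum inE => Fmax ->.
by rewrite mem_filter admissible_reading // mem_words size_map size_iota eqxx.
Qed.
End Cycle.

(* The vertices of C_4, listed explicitly so that maximalb computes. *)
Definition ord4 : seq 'I_4 :=
  [:: @Ordinal 4 0 isT; @Ordinal 4 1 isT; @Ordinal 4 2 isT; @Ordinal 4 3 isT].

Lemma ord4_full x : x \in ord4.
Proof. by case: x => [[|[|[|[|m]]]] hm]. Qed.

Definition cyclic_words4 : seq (seq bool) :=
  filter (fun w => admissible (cyclic_ext w)) (words 4).

Lemma cyclic_words4_maximal :
  all (fun w => maximalb (cycle_adj 4) ord4 (fun i => nth false w i)) cyclic_words4.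
Proof. by vm_compute. Qed.

(* phi(C_4) = 6: the upper bound from cyclic words, the lower bound from the
   six distinct maximal sets above. *)
Lemma phi_C4 : phi (cycle_adj 4) = 6.
Proof.
have count4 : cyclic_count 4 = 6 by vm_compute.
apply/eqP; rewrite eqn_leq -{1}count4 phi_le_cyclic_count //=.
rewrite -count4 /cyclic_count -size_filter -/cyclic_words4.
rewrite -(size_map (fun w => [set i : 'I_4 | nth false w i])) /phi cardE.
apply: uniq_leq_size => [|_ /mapP[w w4 ->]].
  rewrite map_inj_in_uniq ?filter_uniq ?uniq_words // => w1 w2.
  rewrite !mem_filter !mem_words => /andP[_ /eqP s1] /andP[_ /eqP s2] E.
  apply: (@eq_from_nth _ false) => [|i]; first by rewrite s1 s2.
  by rewrite s1 => i_lt; move/setP/(_ (Ordinal i_lt)): E; rewrite !inE.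
rewrite mem_enum inE; apply: (maximalbP (s := ord4)) => //; first exact: ord4_full.
exact: (allP cyclic_words4_maximal).
Qed.

(* Strict bound on cyclically admissible words for n >= 3, n <> 4: computed
   values for n = 3, 5, 6, and the linear bound for n >= 7. *)
Lemma cyclic_count_bound n : 3 <= n -> n != 4 -> cyclic_count n ^ 4 < 6 ^ n.
Proof.
move=> n_ge3 n_neq4; have [n_small|n_large] := ltnP n 7.
  have [C3 C5 C6] : [/\ cyclic_count 3 = 3, cyclic_count 5 = 5 & cyclic_count 6 = 5].
    by vm_compute.
  have : n \in [:: 3; 5; 6] by rewrite !inE; lia.
  by rewrite !inE => /or3P[] /eqP->; rewrite ?C3 ?C5 ?C6.
apply: leq_ltn_trans (linear_count_bound n_large).
by rewrite leq_exp2r // cyclic_count_le.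
Qed.

Theorem lemma2p6 (n : nat) : 3 <= n ->
  (phi (cycle_adj n)) ^ 4 <= 6 ^ n /\
  ((phi (cycle_adj n)) ^ 4 = 6 ^ n <-> n = 4).
Proof.
move=> n_ge3; have [->|n_neq4] := eqVneq n 4; first by rewrite phi_C4.
have phi_lt : phi (cycle_adj n) ^ 4 < 6 ^ n.
  apply: leq_ltn_trans (cyclic_count_bound n_ge3 n_neq4).
  by rewrite leq_exp2r // phi_le_cyclic_count.
split; first exact: ltnW.
by split=> [phi_eq | n_eq]; [rewrite phi_eq ltnn in phi_lt | rewrite n_eq in n_neq4].
Qed.
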